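(* Let $N,k$ be positive integers with $k<N/2$ (and $k\ge 6$), and for a real $c$ with $N/c$ a positive integer define $$\gamma(N,k,c)=\sum_{m=0}^{\lfloor k/2\rfloor}\binom{N/c}{m}^2\binom{(1-2/c)N}{k-2m}.$$ Then there is an absolute constant $C$ such that $\gamma(N,k,c)/\binom{N}{k}\le C\sqrt{c/k}$ for every such $c$ with $2\le c\le k/3$.
   Context: $\gamma(N,k,c)/\binom{N}{k}$ equals the probability that a balance with $N/c$ coins on each pan is balanced, when the $N/c+N/c$ placed coins are chosen among $N$ coins of which $k$ uniformly random ones are false (all false coins have equal weight). *)

From mathcomp Require Import all_boot.
From Stdlib Require Import Reals.

(* gamma N k n, where n = N/c (a positive integer), so that
   (1 - 2/c) N = N - 2n:
   gamma = \sum_{m=0}^{floor(k/2)} C(n,m)^2 * C(N - 2n, k - 2m). *)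
Definition gamma_nat (N k n : nat) : nat :=
  \sum_(0 <= m < k./2.+1) ('C(n, m) ^ 2 * 'C(N - 2 * n, k - 2 * m)).

Definition gamma (N k n : nat) : R := INR (gamma_nat N k n).

(* Write C(n,m)^2 = C(2n,2m) g_m with g_m = C(2m,m) C(2(n-m),n-m) / C(2n,n).
   The Wallis-type bounds 16^m / (4m+1) <= C(2m,m)^2 <= 16^m / (2m+1) give
   g_m^2 (2m+1)(2(n-m)+1) <= 4(n+1), so by AM-GM, for any s > 0,
     C(n,m)^2 <= C(2n+2,2m+1) / (s(2n+1)) + (s/2) C(2n,2m),
   because C(2n+2,2m+1) (2m+1)(2(n-m)+1) = (2n+1)(2n+2) C(2n,2m).
   Multiplying by C(N-2n,k-2m) and summing, Vandermonde's identity bounds the two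
   halves of gamma by C(N+2,k+1) / (s(2n+1)) <= s C(N,k) and (s/2) C(N,k), where
   s = sqrt(c/k) and k C(N+2,k+1) <= 2N C(N,k). Hence the constant 3/2 works;
   of the hypotheses k >= 6 and c <= k/3 only k > 0 is used. *)

From Stdlib Require Import Reals Lra Psatz.
From mathcomp Require Import all_boot zify ring.
(* Reimported so that [field] is Stdlib's tactic on [R]: the algebra-tactics
   [field] only recognises MathComp structures. *)
From Stdlib Require Import Field_tac.

Definition central_bin m := 'C(2 * m, m).

Lemma central_bin_gt0 m : 0 < central_bin m.
Proof. by rewrite bin_gt0; lia. Qed.

Lemma central_bin_fact m : central_bin m * (m`! * m`!) = (2 * m)`!.
Proof. by rewrite -(@bin_fact (2 * m) m); [congr (_ * (_ * _`!)); lia | lia]. Qed.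

Lemma central_binS m : central_bin m.+1 * m.+1 = 2 * (2 * m + 1) * central_bin m.
Proof.
have pos : 0 < m`! * m`! * m.+1 by rewrite !muln_gt0 !fact_gt0.
apply/eqP; rewrite -(eqn_pmul2r pos); apply/eqP.
have fact1 := central_bin_fact m.+1.
rewrite (_ : 2 * m.+1 = (2 * m).+2) ?factS in fact1; last by lia.
transitivity (central_bin m.+1 * (m.+1 * m`! * (m.+1 * m`!))); first by ring.
by rewrite fact1 -(central_bin_fact m); ring.
Qed.

Lemma central_bin_sqr_ub m : central_bin m ^ 2 * (2 * m + 1) <= 16 ^ m.
Proof.
elim: m => [//|m IH].
rewrite -(@leq_pmul2r (m.+1 ^ 2)) ?expn_gt0 //.
have -> : central_bin m.+1 ^ 2 * (2 * m.+1 + 1) * m.+1 ^ 2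
          = (central_bin m.+1 * m.+1) ^ 2 * (2 * m + 3) by ring.
rewrite central_binS.
have -> : (2 * (2 * m + 1) * central_bin m) ^ 2 * (2 * m + 3)
          = central_bin m ^ 2 * (2 * m + 1) * (4 * (2 * m + 1) * (2 * m + 3)) by ring.
apply: leq_trans (leq_mul IH (leqnn _)) _.
have -> : 16 ^ m.+1 * m.+1 ^ 2 = 16 ^ m * (16 * m.+1 ^ 2) by rewrite expnS; ring.
by rewrite leq_pmul2l ?expn_gt0 // -!mulnn; nia.
Qed.

Lemma central_bin_sqr_lb m : 16 ^ m <= central_bin m ^ 2 * (4 * m + 1).
Proof.
elim: m => [//|m IH].
rewrite -(@leq_pmul2r ((4 * m + 1) * m.+1 ^ 2)); last by rewrite muln_gt0 expn_gt0; lia.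
have -> : central_bin m.+1 ^ 2 * (4 * m.+1 + 1) * ((4 * m + 1) * m.+1 ^ 2)
          = (central_bin m.+1 * m.+1) ^ 2 * (4 * m + 5) * (4 * m + 1) by ring.
rewrite central_binS.
have -> : (2 * (2 * m + 1) * central_bin m) ^ 2 * (4 * m + 5) * (4 * m + 1)
          = central_bin m ^ 2 * (4 * m + 1) * (4 * (2 * m + 1) ^ 2 * (4 * m + 5)) by ring.
apply: leq_trans (leq_mul IH (leqnn _)).
have -> : 16 ^ m.+1 * ((4 * m + 1) * m.+1 ^ 2) = 16 ^ m * (16 * (4 * m + 1) * m.+1 ^ 2).
  by rewrite expnS; ring.
by rewrite leq_pmul2l ?expn_gt0 // -!mulnn; nia.
Qed.

Lemma central_bin_ratio_le n m : m <= n ->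
  (central_bin m * central_bin (n - m)) ^ 2 * ((2 * m + 1) * (2 * (n - m) + 1))
  <= 2 * (2 * n + 2) * central_bin n ^ 2.
Proof.
move=> le_mn.
have -> : (central_bin m * central_bin (n - m)) ^ 2 * ((2 * m + 1) * (2 * (n - m) + 1))
  = (central_bin m ^ 2 * (2 * m + 1)) * (central_bin (n - m) ^ 2 * (2 * (n - m) + 1)).
  by ring.
apply: leq_trans (leq_mul (central_bin_sqr_ub m) (central_bin_sqr_ub (n - m))) _.
rewrite -expnD subnKC //; apply: leq_trans (central_bin_sqr_lb n) _.
by rewrite [leqRHS]mulnC; apply: leq_mul => //; lia.
Qed.

Lemma bin_sqr_central_bin n m : m <= n ->
  'C(n, m) ^ 2 * central_bin n = 'C(2 * n, 2 * m) * (central_bin m * central_bin (n - m)).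
Proof.
move=> le_mn.
have pos : 0 < (m`! * (n - m)`!) ^ 2 * (n`! * n`!) by rewrite !muln_gt0 !fact_gt0.
apply/eqP; rewrite -(eqn_pmul2r pos); apply/eqP.
have fact2 : 'C(2 * n, 2 * m) * ((2 * m)`! * (2 * (n - m))`!) = (2 * n)`!.
  by rewrite -(@bin_fact (2 * n) (2 * m)); [congr (_ * (_ * _`!)); lia | lia].
transitivity (('C(n, m) * (m`! * (n - m)`!)) ^ 2 * (central_bin n * (n`! * n`!))).
  by ring.
rewrite bin_fact // central_bin_fact -fact2 -(central_bin_fact m) -(central_bin_fact (n - m)).
by ring.
Qed.

Lemma mul_bin_double n m : m <= n ->
  'C(2 * n + 2, 2 * m + 1) * ((2 * m + 1) * (2 * (n - m) + 1))
  = (2 * n + 1) * (2 * n + 2) * 'C(2 * n, 2 * m).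
Proof.
move=> le_mn.
have diag := mul_bin_diag (2 * n).+2 (2 * m).
have down := mul_bin_down (2 * n).+1 (2 * m).
rewrite /= (_ : (2 * n).+1 - 2 * m = 2 * (n - m) + 1) in diag down; last by lia.
rewrite !addn2 !addn1.
transitivity ((2 * m).+1 * 'C((2 * n).+2, (2 * m).+1) * (2 * (n - m) + 1)); first by ring.
by rewrite -diag -mulnA (mulnC 'C(_, _)) -down; ring.
Qed.

Lemma sum_every_other_le (f : nat -> nat) e K : e <= 1 ->
  \sum_(0 <= m < K.+1) f (2 * m + e) <= \sum_(0 <= i < (2 * K + e).+1) f i.
Proof.
move=> le_e1; elim: K => [|K IH].
  by rewrite big_nat1 (big_cat_nat (n := e)) //= big_nat1 leq_addl.
rewrite [leqLHS]big_nat_recr //= (_ : 2 * K.+1 + e = (2 * K + e).+2); last by lia.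
rewrite (big_nat_recr (2 * K + e).+2) //= (big_nat_recr (2 * K + e).+1) //=.
by rewrite -addnA leq_add // leq_addl.
Qed.

Lemma Vandermonde_every_other_le a b k K e : 2 * K <= k -> e <= 1 ->
  \sum_(0 <= m < K.+1) 'C(a, 2 * m + e) * 'C(b, k - 2 * m) <= 'C(a + b, k + e).
Proof.
move=> le_2K_k le_e1.
pose F i := 'C(a, i) * 'C(b, k + e - i).
have -> : \sum_(0 <= m < K.+1) 'C(a, 2 * m + e) * 'C(b, k - 2 * m)
          = \sum_(0 <= m < K.+1) F (2 * m + e).
  by apply: eq_big_nat => m /andP[_ lt_mK]; rewrite /F; congr (_ * 'C(b, _)); lia.
apply: leq_trans (sum_every_other_le F e K le_e1) _.
rewrite -Vandermonde -(big_mkord xpredT F).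
by rewrite [leqRHS](big_cat_nat (n := (2 * K + e).+1)) //= ?leq_addr //; lia.
Qed.

Lemma bin_add2_le N k : 2 * k <= N -> 'C(N + 2, k + 1) * k <= 2 * N * 'C(N, k).
Proof.
move=> le_2k_N; rewrite addn2 addn1.
have diag := mul_bin_diag N.+2 k; have down := mul_bin_down N.+1 k; rewrite /= in diag down.
have mul_kS : 'C(N.+2, k.+1) * k.+1 <= 2 * N.+1 * 'C(N, k).
  rewrite -(@leq_pmul2r N.+2) //.
  have -> : 'C(N.+2, k.+1) * k.+1 * N.+2 = N.+2 * (k.+1 * 'C(N.+2, k.+1)) by ring.
  have -> : 2 * N.+1 * 'C(N, k) * N.+2 = 2 * N.+2 * (N.+1 * 'C(N, k)) by ring.
  by rewrite -diag down !mulnA leq_mul //; nia.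
rewrite -(@leq_pmul2r k.+1) // mulnAC.
apply: leq_trans (leq_mul mul_kS (leqnn k)) _.
have -> : 2 * N.+1 * 'C(N, k) * k = 2 * 'C(N, k) * (N.+1 * k) by ring.
have -> : 2 * N * 'C(N, k) * k.+1 = 2 * 'C(N, k) * (N * k.+1) by ring.
by rewrite leq_mul //; lia.
Qed.

Open Scope R_scope.

Lemma amgm_le g s q t : 0 <= g -> 0 < s -> 0 < q -> g * g * q <= 2 * t ->
  g <= t / (s * q) + s / 2.
Proof.
move=> g_ge0 s_gt0 q_gt0 g_le.
set a := t / (s * q).
have asq : a * s * q = t by rewrite /a; field; lra.
have a_ge0 : 0 <= a.
  by rewrite /a; apply: Rmult_le_pos; [nra | apply/Rlt_le/Rinv_0_lt_compat; nra].
have gap : 0 <= (a - s / 2) * (a - s / 2) * q by apply: Rmult_le_pos; [exact: Rle_0_sqr | lra].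
have expand : (a + s / 2) * (a + s / 2) * q = (a - s / 2) * (a - s / 2) * q + 2 * (a * s * q).
  by field.
have : g * g * q <= (a + s / 2) * (a + s / 2) * q by lra.
by move/(Rmult_le_reg_r _ _ _ q_gt0); nra.
Qed.

Lemma INR_bin_sqr_le n m s : 0 < s ->
  INR 'C(n, m) * INR 'C(n, m) <=
    INR 'C(2 * n + 2, 2 * m + 1) / (s * (2 * INR n + 1)) + s / 2 * INR 'C(2 * n, 2 * m).
Proof.
move=> s_gt0.
have n_ge0 := pos_INR n.
have w_ge0 := pos_INR 'C(2 * n, 2 * m).
case: (leqP m n) => [le_mn | lt_nm]; last first.
  rewrite bin_small //= Rmult_0_l -[0]Rplus_0_r.
  apply: Rplus_le_compat; apply: Rmult_le_pos => //; try exact: pos_INR; try lra.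
  by apply/Rlt_le/Rinv_0_lt_compat; nra.
set w := INR 'C(2 * n, 2 * m).
set b := INR (central_bin n).
set g := INR (central_bin m) * INR (central_bin (n - m)) / b.
set q := INR (2 * m + 1) * INR (2 * (n - m) + 1).
have b_gt0 : 0 < b by apply/lt_0_INR/ltP/central_bin_gt0.
have q_gt0 : 0 < q by apply: Rmult_lt_0_compat; apply/lt_0_INR/ltP; rewrite addn1.
have g_ge0 : 0 <= g.
  by apply: Rmult_le_pos; [apply: Rmult_le_pos; exact: pos_INR | exact/Rlt_le/Rinv_0_lt_compat].
have sqr_eq : INR 'C(n, m) * INR 'C(n, m) = w * g.
  have := f_equal INR (bin_sqr_central_bin _ _ le_mn); rewrite !mult_INR -/b -/w => eq.
  by apply: (Rmult_eq_reg_r b); [rewrite eq /g; field | ]; lra.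
have g_le : g * g * q <= 2 * INR (2 * n + 2).
  have := le_INR _ _ (elimT leP (central_bin_ratio_le _ _ le_mn)).
  rewrite !mult_INR -/b -/q => bound.
  apply: (Rmult_le_reg_r (b * b)); first nra.
  have -> : g * g * q * (b * b)
            = INR (central_bin m) * INR (central_bin (n - m)) *
              (INR (central_bin m) * INR (central_bin (n - m))) * q by rewrite /g; field; lra.
  by simpl INR in bound |- *; lra.
have P_eq : INR 'C(2 * n + 2, 2 * m + 1) = (2 * INR n + 1) * INR (2 * n + 2) * w / q.
  apply: (Rmult_eq_reg_r q); last lra.
  have := f_equal INR (mul_bin_double _ _ le_mn); rewrite !mult_INR -/q -/w => ->.
  by rewrite plus_INR mult_INR; simpl INR; field; lra.
have -> : INR 'C(2 * n + 2, 2 * m + 1) / (s * (2 * INR n + 1)) + s / 2 * w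
          = w * (INR (2 * n + 2) / (s * q) + s / 2) by rewrite P_eq; field; lra.
by rewrite sqr_eq; apply: Rmult_le_compat_l => //; exact: amgm_le.
Qed.

Lemma INR_sum_le (F G H : nat -> nat) (a b : R) K :
  (forall m, INR (F m) <= a * INR (G m) + b * INR (H m)) ->
  INR (\sum_(0 <= m < K) F m)
    <= a * INR (\sum_(0 <= m < K) G m) + b * INR (\sum_(0 <= m < K) H m).
Proof.
move=> FGH; elim: K => [|K IH]; first by rewrite !big_geq //=; lra.
by rewrite !big_nat_recr //= !plus_INR; have := FGH K; lra.
Qed.

Lemma gamma_le N k n s : 0 < s -> (2 * n <= N)%N ->
  gamma N k n <= / (s * (2 * INR n + 1)) * INR 'C(N + 2, k + 1) + s / 2 * INR 'C(N, k).
Proof.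
move=> s_gt0 le_2n_N.
have half_le : (2 * k./2 <= k)%N by have := odd_double_half k; rewrite -mul2n; lia.
have odd_sum := Vandermonde_every_other_le (2 * n + 2) (N - 2 * n) k k./2 1 half_le isT.
have even_sum := Vandermonde_every_other_le (2 * n) (N - 2 * n) k k./2 0 half_le isT.
rewrite (_ : 2 * n + 2 + (N - 2 * n) = N + 2)%N in odd_sum; last by lia.
rewrite (_ : 2 * n + (N - 2 * n) = N)%N ?addn0 in even_sum; last by lia.
rewrite (eq_bigr (fun m => 'C(2 * n, 2 * m) * 'C(N - 2 * n, k - 2 * m))%N) in even_sum;
  last by move=> m _; rewrite addn0.
have term m : INR ('C(n, m) * 'C(n, m) * 'C(N - 2 * n, k - 2 * m))
    <= / (s * (2 * INR n + 1)) * INR ('C(2 * n + 2, 2 * m + 1) * 'C(N - 2 * n, k - 2 * m))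
       + s / 2 * INR ('C(2 * n, 2 * m) * 'C(N - 2 * n, k - 2 * m)).
  rewrite !mult_INR.
  by have := INR_bin_sqr_le n m s s_gt0; have := pos_INR 'C(N - 2 * n, k - 2 * m); nra.
(* [gamma_nat] squares with Stdlib's [Nat.pow], which computes [x * (x * 1)]. *)
rewrite /gamma /gamma_nat (eq_bigr (fun m => 'C(n, m) * 'C(n, m) * 'C(N - 2 * n, k - 2 * m))%N);
  last by move=> m _ /=; rewrite Nat.mul_1_r.
apply: Rle_trans (INR_sum_le _ _ _ _ _ _ term) _.
apply: Rplus_le_compat; apply: Rmult_le_compat_l.
- by apply/Rlt_le/Rinv_0_lt_compat; have := pos_INR n; nra.
- by apply/le_INR/leP.
- lra.
- by apply/le_INR/leP.
Qed.

Lemma bin_add2_ratio_le N k n c : (2 * k <= N)%N -> 0 < INR k -> 0 < c -> INR N = c * INR n ->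
  / (sqrt (c / INR k) * (2 * INR n + 1)) * INR 'C(N + 2, k + 1)
    <= sqrt (c / INR k) * INR 'C(N, k).
Proof.
move=> le_2k_N k_gt0 c_gt0 N_eq.
set s := sqrt (c / INR k).
have s_gt0 : 0 < s by apply/sqrt_lt_R0/Rdiv_lt_0_compat.
have s_sqr : s * s = c / INR k by apply/sqrt_sqrt/Rlt_le/Rdiv_lt_0_compat.
have factor_gt0 : 0 < s * (2 * INR n + 1) by have := pos_INR n; nra.
have := le_INR _ _ (elimT leP (bin_add2_le _ _ le_2k_N)).
rewrite !mult_INR; simpl INR => bound.
apply: (Rmult_le_reg_l _ _ _ factor_gt0); rewrite -Rmult_assoc Rinv_r; last lra.
have -> : s * (2 * INR n + 1) * (s * INR 'C(N, k)) = (2 * INR N + c) / INR k * INR 'C(N, k).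
  transitivity (s * s * (2 * INR n + 1) * INR 'C(N, k)); first by field.
  by rewrite s_sqr N_eq; field; lra.
apply: (Rmult_le_reg_r (INR k)) => //.
rewrite (_ : _ / INR k * _ * INR k = (2 * INR N + c) * INR 'C(N, k)); last by field; lra.
by have := pos_INR 'C(N, k); nra.
Qed.

Theorem lemma4 :
  exists C : R, forall (N k : nat) (c : R) (n : nat),
    (6 <= k)%nat -> INR k < INR N / 2 ->
    (1 <= n)%nat -> INR N / c = INR n ->
    2 <= c -> c <= INR k / 3 ->
    gamma N k n / INR 'C(N, k) <= C * sqrt (c / INR k).
Proof.
exists (3 / 2) => N k c n k_ge6 k_lt_N _ N_c c_ge2 _.
have k_gt0 : 0 < INR k by apply/lt_0_INR/ltP; lia.
have N_eq : INR N = c * INR n by rewrite -N_c; field; lra.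
have le_2n_N : (2 * n <= N)%N.
  by apply/leP/INR_le; rewrite mult_INR; have := pos_INR n; simpl INR; nra.
have le_2k_N : (2 * k <= N)%N by apply/leP/INR_le; rewrite mult_INR; simpl INR; lra.
have Ck_gt0 : 0 < INR 'C(N, k) by apply/lt_0_INR/ltP; rewrite bin_gt0; lia.
have s_gt0 : 0 < sqrt (c / INR k) by apply/sqrt_lt_R0/Rdiv_lt_0_compat; lra.
have gamma_bound := gamma_le N k n _ s_gt0 le_2n_N.
have odd_part := bin_add2_ratio_le N k n c le_2k_N k_gt0 ltac:(lra) N_eq.
apply: (Rmult_le_reg_r (INR 'C(N, k))) => //.
rewrite /Rdiv Rmult_assoc Rinv_l; lra.
Qed.
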